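(* Let $\langle r_n\rangle_{n=1}^\infty$ be a sequence in $\mathbb{N}$ and let $U=\bigcup_{n=1}^\infty\mathcal{P}_n({}^{r_n}\mathbb{N})$. Then: (i) there is a family $\{B_\alpha:\alpha<2^\omega\}$ of infinite subsets of $U$ with $B_\alpha\cap B_\beta$ finite for all $\alpha<\beta<2^\omega$, such that for every $\alpha<2^\omega$ and every $L\in U$ there exist $L'\in B_\alpha$ and $a\in\mathbb{N}$ with $L'=L+a$; (ii) there is a family $\{B_\alpha:\alpha<\omega\}$ of pairwise disjoint infinite subsets of $U$ such that for every $\alpha<\omega$ and every $L\in U$ there exist $L'\in B_\alpha$ and $a\in\mathbb{N}$ with $L'=L+a$.
   Context: $\mathbb{N}=\{1,2,\dots\}$. For a set $X$ and $n\in\mathbb{N}$, $\mathcal{P}_n(X)$ is the set of subsets of $X$ of size $n$, and ${}^{m}X$ is the set of sequences of length $m$ in $X$ (functions $\{1,\dots,m\}\to X$). For $f\in{}^m\mathbb{N}$ and $a\in\mathbb{Z}$, $f+a$ is the function $t\mapsto f(t)+a$, and for $L\subseteq{}^m\mathbb{N}$, $L+a=\{f+a: f\in L\}$. *)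

From mathcomp Require Import all_boot.
From mathcomp Require Export boolp classical_sets functions cardinality.
Set Implicit Arguments. Unset Strict Implicit. Unset Printing Implicit Defensive.
Local Open Scope classical_set_scope.

(* ℕ = {1,2,...}.  A sequence of length m in ℕ is encoded as an s : seq nat
   with size s = m and all entries positive (positions 0..m-1 stand for 1..m). *)
Definition seqN (m : nat) : set (seq nat) :=
  [set s | size s = m /\ all (fun x => 0 < x) s].

Definition Pn (n : nat) (X : set (seq nat)) : set (set (seq nat)) :=
  [set L | L `<=` X /\ (L #= `I_n)%card].

Definition Ufam (r : nat -> nat) : set (set (seq nat)) :=
  [set L | exists n, 0 < n /\ Pn n (seqN (r n)) L].

Definition shiftf (a : nat) (f : seq nat) : seq nat := map (fun x => x + a) f.
Definition shiftL (a : nat) (L : set (seq nat)) : set (seq nat) := shiftf a @` L.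

Definition catches_translates (r : nat -> nat) (B : set (set (seq nat))) : Prop :=
  forall L, Ufam r L -> exists L' a, B L' /\ 0 < a /\ L' = shiftL a L.

From mathcomp Require Import all_boot zify.
From mathcomp Require Import boolp classical_sets functions cardinality.
Local Open Scope classical_set_scope.

(** Say that L sits at level t when all its sequences have length at most t
    and entries in [t, 2t], and t itself occurs as an entry.  The level of L
    is then its least entry, hence unique, and only finitely many L sit at a
    given level.  Conversely every L in U, shifted so that its least entry
    becomes a large t, sits at level t.  So if B(A) collects the members of U
    sitting at a level in A, then B(A) is infinite and catches a translate of
    every L in U as soon as A is infinite, while B(A) meets B(A') in
    B(A `&` A').  It remains to take an almost disjoint family of 2^omega
    infinite subsets of nat (codes of the branches of the binary tree) and a
    disjoint family of omega of them (codes of the columns of nat * nat). *)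

Lemma infinite_set_image {T U} {A : set T} {f : T -> U} :
  {in A &, injective f} -> infinite_set A -> infinite_set (f @` A).
Proof. by move=> fI; rewrite (eq_finite_set (inj_card_eq fI)). Qed.

Lemma infinite_range {T} (f : nat -> T) : injective f -> infinite_set (range f).
Proof. by move=> fI; apply: (infinite_set_image _ infinite_nat) => x y _ _; apply: fI. Qed.

Lemma infinite_nat_ge {A : set nat} K : infinite_set A -> exists2 t, A t & K <= t.
Proof.
move=> infA; have [t [At tK]] := infinite_setN0 (infinite_setD infA (finite_II K)).
by exists t => //; rewrite leqNgt; apply/negP.
Qed.

Lemma finite_set_subsets {T : eqType} {Y : set T} :
  finite_set Y -> finite_set [set L | L `<=` Y].
Proof.
move=> /finite_seqP [xs ->].
apply: (sub_finite_set (B := (fun m : (size xs).-tuple bool => [set` mask m xs]) @` setT)).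
  move=> L /= LY; exists (map_tuple (fun x => `[< L x >]) (in_tuple xs)) => //.
  apply/seteqP; split => x /=; rewrite -filter_mask mem_filter.
    by move=> /andP [/asboolW].
  by move=> Lx; rewrite (LY x Lx) andbT; apply: asboolT.
exact/finite_image/finite_finset.
Qed.

Lemma finite_bounded_seqs {T : eqType} {Y : set T} n :
  finite_set Y -> finite_set [set s : seq T | size s <= n /\ [set` s] `<=` Y].
Proof.
move=> finY; elim: n => [|n IH].
  by apply: (sub_finite_set _ (finite_set1 [::])) => -[|x s] [].
apply: (sub_finite_set (B := [set [::]] `|` (fun p => p.1 :: p.2) @`
  (Y `*` [set s : seq T | size s <= n /\ [set` s] `<=` Y]))).
  case=> [|x s] /= [sz sY]; [by left | right].
  exists (x, s) => //; split => /=; first exact/sY/mem_head.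
  by split => // y ys; apply: sY; rewrite /= inE ys orbT.
by rewrite finite_setU; split; [exact: finite_set1 | apply/finite_image/finite_setX].
Qed.

Lemma finite_seqs_bounded {L : set (seq nat)} :
  finite_set L -> exists K, forall s, L s -> size s <= K /\ all (leq^~ K) s.
Proof.
move=> /finite_seqP [ls ->]; exists (\max_(s <- ls) (size s + \max_(x <- s) x)).
move=> s sl; have := leq_bigmax_seq (F := fun s => size s + \max_(x <- s) x) s sl isT.
move=> /= sK; split; first lia.
apply/allP => x xs; have := leq_bigmax_seq (F := id) x xs isT; rewrite /=; lia.
Qed.

Lemma least_entry {L : set (seq nat)} {s0 x0} : L s0 -> x0 \in s0 ->
  exists m, (exists2 s, L s & m \in s) /\ forall s, L s -> all (leq m) s.
Proof.
move=> Ls0 xs0.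
have ex : exists x, `[< exists2 s, L s & x \in s >].
  by exists x0; apply/asboolP; exists s0.
case: (ex_minnP ex) => m /asboolP m_in m_min; exists m; split => // s Ls.
by apply/allP => x xs; apply: m_min; apply/asboolP; exists s.
Qed.

Definition at_level (t : nat) (L : set (seq nat)) : Prop :=
  (forall s, L s -> size s <= t /\ all (fun x => t <= x <= t.*2) s) /\
  exists2 s, L s & t \in s.

Lemma at_level_inj {L t t'} : at_level t L -> at_level t' L -> t = t'.
Proof.
move=> [bnd [s Ls ts]] [bnd' [s' Ls' ts']].
have /andP [tt' _] := allP (bnd s' Ls').2 t' ts'.
have /andP [t't _] := allP (bnd' s Ls).2 t ts.
by apply/eqP; rewrite eqn_leq tt' t't.
Qed.

Lemma finite_at_level t : finite_set (at_level t).
Proof.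
apply: (sub_finite_set _ (finite_set_subsets (finite_bounded_seqs t (finite_II t.*2.+1)))).
move=> L [bnd _] s Ls; have [sz ent] := bnd s Ls; split => // x xs.
by have /andP [_] := allP ent x xs.
Qed.

Lemma at_level_shiftL L m M t :
  (forall s, L s -> size s <= t /\ all (fun x => m <= x <= M) s) ->
  (exists2 s, L s & m \in s) -> M <= t ->
  at_level t (shiftL (t - m) L).
Proof.
move=> bnd [s0 Ls0 ms0] Mt.
have /andP [_ mM] := allP (bnd s0 Ls0).2 m ms0.
split.
  move=> _ [s Ls <-]; have [sz ent] := bnd s Ls.
  rewrite size_map all_map; split => //; apply/allP => x xs /=.
  by have /andP [mx xM] := allP ent x xs; rewrite -addnn; apply/andP; split; lia.
exists (shiftf (t - m) s0); first by exists s0.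
by apply/mapP; exists m => //; lia.
Qed.

Section Translates.

Variable r : nat -> nat.
Hypothesis r_pos : forall n, 0 < n -> 0 < r n.

Lemma Ufam_finite {L} : Ufam r L -> finite_set L.
Proof. by move=> [n [_ [_ Ln]]]; apply/finite_setP; exists n. Qed.

Lemma Ufam_has_entry {L} : Ufam r L -> exists s x, L s /\ x \in s.
Proof.
move=> [n [n0 [Lr Ln]]].
have [s Ls] : L !=set0.
  apply/set0P/negP => /eqP L0; move: Ln.
  by rewrite L0 card_eq_sym card_eq0 => /eqP /seteqP [/(_ 0 n0)].
have [sz _] := Lr s Ls; case: s Ls sz => [|x s] Ls sz.
  by have := r_pos n n0; rewrite -sz.
by exists (x :: s), x; rewrite mem_head.
Qed.

Lemma Ufam_set1 s : seqN (r 1) s -> Ufam r [set s].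
Proof. by move=> rs; exists 1; split => //; split; [move=> _ -> | exact: card_set1]. Qed.

Lemma Ufam_shiftL a L : 0 < a -> Ufam r L -> Ufam r (shiftL a L).
Proof.
move=> a0 [n [n0 [Lr Ln]]]; exists n; split => //; split.
  move=> _ [s Ls <-]; have [sz ent] := Lr s Ls; split; first by rewrite size_map.
  by rewrite all_map; apply/allP => x _ /=; lia.
apply: card_eq_trans Ln; apply: inj_card_eq => x y _ _.
by apply: inj_map => u v /= /eqP; rewrite eqn_add2r => /eqP.
Qed.

Definition levelled (A : set nat) : set (set (seq nat)) :=
  [set L | Ufam r L /\ exists2 t, A t & at_level t L].

Lemma levelled_sub A : levelled A `<=` Ufam r.
Proof. by move=> L []. Qed.

Lemma levelledI A A' : levelled A `&` levelled A' = levelled (A `&` A').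
Proof.
apply/seteqP; split => L.
  move=> [[UL [t At Lt]] [_ [t' A't' Lt']]]; split => //.
  by exists t => //; split => //; rewrite (at_level_inj Lt Lt').
by move=> [UL [t [At A't] Lt]]; split; split => //; exists t.
Qed.

Lemma levelled0 : levelled set0 = set0.
Proof. by apply/seteqP; split => L // [_ []]. Qed.

Lemma levelled_finite A : finite_set A -> finite_set (levelled A).
Proof.
move=> finA; apply: (sub_finite_set _ (bigcup_finite finA (fun t _ => finite_at_level t))).
by move=> L [_ [t At Lt]]; exists t.
Qed.

Lemma levelled_infinite A : infinite_set A -> infinite_set (levelled A).
Proof.
move=> infA; have r1 := r_pos 1 isT.
have single_inj : injective (fun t : nat => [set nseq (r 1) t]).
  move=> x y e; have : [set nseq (r 1) y] (nseq (r 1) x) by rewrite -e.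
  by move=> /(congr1 (nth 0 ^~ 0)); rewrite !nth_nseq r1.
apply: (sub_infinite_set _
  (infinite_set_image (in2W single_inj) (infinite_setD infA (finite_II (r 1))))).
move=> _ [t [At /negP rt] <-]; rewrite -leqNgt in rt; split.
  by apply: Ufam_set1; rewrite /seqN /= size_nseq all_nseq; split => //; lia.
exists t => //; split; last by exists (nseq (r 1) t); rewrite // mem_nseq r1 eqxx.
by move=> s /= ->; rewrite size_nseq all_nseq -addnn; split; lia.
Qed.

Lemma levelled_catches A : infinite_set A -> catches_translates r (levelled A).
Proof.
move=> infA L UL.
have [K bnd] := finite_seqs_bounded (Ufam_finite UL).
have [s0 [x0 [Ls0 xs0]]] := Ufam_has_entry UL.
have [m [m_in m_min]] := least_entry Ls0 xs0.
have [t At Kt] := infinite_nat_ge K.+1 infA.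
have mK : m <= K by case: m_in => s Ls ms; exact: (allP (bnd s Ls).2).
exists (shiftL (t - m) L), (t - m); split; last by split => //; lia.
split; first by apply: Ufam_shiftL => //; lia.
exists t => //; apply: (at_level_shiftL L m K t) => //; last lia.
move=> s Ls; have [sz ent] := bnd s Ls; split; first lia.
by apply/allP => x xs; rewrite (allP (m_min s Ls)) //=; exact: (allP ent).
Qed.

End Translates.

Definition branch_prefix (al : set nat) (n : nat) : seq bool :=
  mkseq (fun i => `[< al i >]) n.

Definition branch_codes (al : set nat) : set nat := range (pickle \o branch_prefix al).

Lemma branch_codes_infinite al : infinite_set (branch_codes al).
Proof.
apply: infinite_range => n m /(pcan_inj pickleK) /(congr1 size).
by rewrite !size_mkseq.
Qed.

Lemma branch_codes_almost_disjoint al be :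
  al <> be -> finite_set (branch_codes al `&` branch_codes be).
Proof.
move=> neq; have [i ne_i] : exists i, ~ (al i <-> be i).
  by apply/existsNP => same; apply: neq; apply/funext => i; apply/propext.
apply: (sub_finite_set _ (finite_image (pickle \o branch_prefix al) (finite_II i.+1))).
move=> _ [[n _ <-] [m _ /(pcan_inj pickleK) e]]; exists n => //.
have mn : m = n by move: e => /(congr1 size); rewrite !size_mkseq.
subst m; rewrite /= ltnS leqNgt; apply/negP => iln; apply: ne_i.
by apply: asbool_eq_equiv; have := congr1 (nth false ^~ i) e; rewrite /= !nth_mkseq.
Qed.

Definition column_codes (k : nat) : set nat := range (fun n : nat => pickle (k, n)).

Lemma column_codes_infinite k : infinite_set (column_codes k).
Proof. by apply: infinite_range => n m /(pcan_inj pickleK) []. Qed.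

Lemma column_codes_disjoint k l : k <> l -> column_codes k `&` column_codes l = set0.
Proof.
move=> kl; apply/seteqP; split => // _ [[n _ <-] [m _ /(pcan_inj pickleK) [lk _]]].
exact: kl.
Qed.

Theorem lemma3p1 (r : nat -> nat) (hr : forall n, 0 < n -> 0 < r n) :
  (exists B : set nat -> set (set (seq nat)),
      (forall al, B al `<=` Ufam r /\ infinite_set (B al)) /\
      (forall al be, al <> be -> finite_set (B al `&` B be)) /\
      (forall al, catches_translates r (B al)))
  /\
  (exists B : nat -> set (set (seq nat)),
      (forall al, B al `<=` Ufam r /\ infinite_set (B al)) /\
      (forall al be, al <> be -> B al `&` B be = set0) /\
      (forall al, catches_translates r (B al))).
Proof.
split.
  exists (fun al => levelled r (branch_codes al)); split; last split.
  - move=> al; split; first exact: levelled_sub.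
    exact: levelled_infinite hr _ (branch_codes_infinite al).
  - move=> al be neq; rewrite levelledI.
    exact/levelled_finite/branch_codes_almost_disjoint.
  - by move=> al; apply: levelled_catches hr _ (branch_codes_infinite al).
exists (fun k => levelled r (column_codes k)); split; last split.
- move=> k; split; first exact: levelled_sub.
  exact: levelled_infinite hr _ (column_codes_infinite k).
- by move=> k l kl; rewrite levelledI column_codes_disjoint // levelled0.
- by move=> k; apply: levelled_catches hr _ (column_codes_infinite k).
Qed.
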